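(* For $Y\in\mathfrak o(V,K)$ and $y\in V$ let $\mu_{Y,y}\in\mathfrak g^*$ be the functional $Z\mapsto\langle (Y,y^* )\,|\,Z\rangle$ on $\mathfrak g$. Then the assignment $(Y,y)\mapsto\mu_{Y,y}$ induces a well-defined bijection from the set of special cotypes (equivalence classes of special tuples) onto the set of coadjoint orbits of $G$ in $\mathfrak g^*$; that is: every element of $\mathfrak g^*$ is of the form $\mu_{Y,y}$, and two special tuples $(Y,y)$, $(Y',y')$ are equivalent if and only if $\mu_{Y,y}$ and $\mu_{Y',y'}$ lie in the same $G$-coadjoint orbit, where $G$ acts on $\mathfrak g^*$ by $(g\cdot\mu)(Z)=\mu(g^{-1}Zg)$.
   Context: Let $n\ge 0$ be an integer and let $\widetilde K$ be a real symmetric $n\times n$ matrix with $\widetilde K^2=I_n$. Let $V=\mathbb R^{n+2}$ with standard basis $e_1,\dots,e_{n+2}$, and let $K=\begin{pmatrix}0&0&1\\0&\widetilde K&0\\1&0&0\end{pmatrix}$ (block sizes $1,n,1$). For $x,w\in V$ write $x^*=x^TK$ (a row vector) and $L_{u,w}=u\,w^*-w\,u^*$. Let $O(V,K)=\{P:P^TKP=K\}$, $\mathfrak o(V,K)=\{X:X^TK+KX=0\}$, and $O(V,K)_{e_{n+2}}=\{P\in O(V,K):Pe_{n+2}=e_{n+2}\}$. Let $\mathfrak g^\vee$ be the space of $(n+3)\times(n+3)$ matrices $(X,x^* ):=\begin{pmatrix}0&x^*\\0&X\end{pmatrix}$ with $X\in\mathfrak o(V,K)$, $x\in V$, with bilinear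 form $\langle (X,x^* )\,|\,(\overline X,\overline x^{\,*})\rangle=\tfrac12\mathrm{tr}(X\overline X)+\overline x^{\,T}Kx$. Let $G$ be the group (generalized Galilei group) of matrices $\begin{pmatrix}1&p^*\\0&P\end{pmatrix}$ with $P\in O(V,K)_{e_{n+2}}$ and $p\in V$ with $p^*(e_{n+2})=0$, and let $\mathfrak g$ be its Lie algebra, the matrices $(X,x^* )\in\mathfrak g^\vee$ with $Xe_{n+2}=0$ and $x^*(e_{n+2})=0$. A special tuple is a pair $(Y,y)$ (written $(V,Y,y;K)$ in the paper) with $Y\in\mathfrak o(V,K)$, $y\in V$. Two special tuples $(Y,y)$ and $(Y',y')$ are equivalent if there exist $P\in O(V,K)_{e_{n+2}}$, vectors $v,p\in V$ with $p^*(e_{n+2})=0$, and $v_0\in\mathbb R$ such that $Y'+L_{v,e_{n+2}}=P(Y+L_{p,y})P^{-1}$ and $y'=Py+v_0e_{n+2}$. A special cotype is an equivalence class of special tuples. *)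

From HB Require Import structures.
From mathcomp Require Import all_boot all_order all_algebra.
From mathcomp Require Import reals.
Set Implicit Arguments. Unset Strict Implicit. Unset Printing Implicit Defensive.
Import Order.TTheory GRing.Theory Num.Theory.
Local Open Scope ring_scope.

Section Galilei.
Context {R : realType} {n : nat} (Kt : 'M[R]_n).

(* index i of 'I_(n.+2) (0-based) lies in the middle block: i = 1..n, giving i-1 : 'I_n *)
Definition mid_index (i : nat) : option 'I_n :=
  if (0 < i)%N then insub i.-1 else None.

(* K = [[0,0,1],[0,Kt,0],[1,0,0]] with block sizes 1,n,1 *)
Definition Kmat : 'M[R]_(n.+2) :=
  \matrix_(i, j)
    (if ((i == 0%N :> nat) && (j == n.+1 :> nat)) ||
        ((i == n.+1 :> nat) && (j == 0%N :> nat)) then 1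
     else match mid_index i, mid_index j with
          | Some a, Some b => Kt a b
          | _, _ => 0
          end).

Definition elast : 'cV[R]_(n.+2) := delta_mx ord_max 0.

Definition star (x : 'cV[R]_(n.+2)) : 'rV[R]_(n.+2) := x^T *m Kmat.

Definition Lmx (u w : 'cV[R]_(n.+2)) : 'M[R]_(n.+2) :=
  u *m star w - w *m star u.

Definition inO (P : 'M[R]_(n.+2)) : Prop := P^T *m Kmat *m P = Kmat.
Definition ino (X : 'M[R]_(n.+2)) : Prop := X^T *m Kmat + Kmat *m X = 0.
Definition inOe (P : 'M[R]_(n.+2)) : Prop := inO P /\ P *m elast = elast.

Definition gvee_mx (X : 'M[R]_(n.+2)) (xs : 'rV[R]_(n.+2)) : 'M[R]_(1 + n.+2) :=
  block_mx (0 : 'M_1) xs 0 X.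

Definition in_g (Z : 'M[R]_(1 + n.+2)) : Prop :=
  exists (X : 'M[R]_(n.+2)) (x : 'cV[R]_(n.+2)),
    [/\ ino X, X *m elast = 0, star x *m elast = 0 & Z = gvee_mx X (star x)].

Definition in_G (g : 'M[R]_(1 + n.+2)) : Prop :=
  exists (P : 'M[R]_(n.+2)) (p : 'cV[R]_(n.+2)),
    [/\ inOe P, star p *m elast = 0 & g = block_mx (1 : 'M_1) (star p) 0 P].

(* elements of g^*: functions which are linear on g (only their values on g matter) *)
Definition gdual (phi : 'M[R]_(1 + n.+2) -> R) : Prop :=
  forall (a : R) (Z1 Z2 : 'M[R]_(1 + n.+2)), in_g Z1 -> in_g Z2 ->
    phi (a *: Z1 + Z2) = a * phi Z1 + phi Z2.

(* mu_{Y,y}(Z) = < (Y, y^* ) | Z > for Z = (Xb, xb^* ):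
   = 1/2 tr(Y Xb) + xb^T K y = 1/2 tr(Y Xb) + xb^* y,
   where Xb = drsubmx Z and xb^* = ursubmx Z. *)
Definition mu (Y : 'M[R]_(n.+2)) (y : 'cV[R]_(n.+2)) (Z : 'M[R]_(1 + n.+2)) : R :=
  2^-1 * \tr (Y *m drsubmx Z) + (ursubmx Z *m y) 0 0.

Definition equiv_tuple (Y : 'M[R]_(n.+2)) (y : 'cV[R]_(n.+2))
    (Y' : 'M[R]_(n.+2)) (y' : 'cV[R]_(n.+2)) : Prop :=
  exists (P : 'M[R]_(n.+2)) (v p : 'cV[R]_(n.+2)) (v0 : R),
    [/\ inOe P, star p *m elast = 0,
        Y' + Lmx v elast = P *m (Y + Lmx p y) *m invmx P
      & y' = P *m y + v0 *: elast].

Definition same_coadj_orbit (m m' : 'M[R]_(1 + n.+2) -> R) : Prop :=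
  exists g : 'M[R]_(1 + n.+2), in_G g /\
    forall Z, in_g Z -> m' Z = m (invmx g *m Z *m g).

End Galilei.

From HB Require Import structures.
From mathcomp Require Import all_boot all_order all_algebra.
From mathcomp Require Import reals.
From mathcomp Require Import ring lra zify.
Set Implicit Arguments. Unset Strict Implicit. Unset Printing Implicit Defensive.
Import Order.TTheory GRing.Theory Num.Theory.
Local Open Scope ring_scope.

(* Write e for the last and e_1 for the first basis vector, so that K e = e_1
   and x^*(e) is the first coordinate of x.  An element (X, x^* ) of g is then a
   pair with X in o(V,K), X e = 0 and x_1 = 0, and the trace pairing shows that
   mu_{Y,y} vanishes on g exactly when Y = L_{v,e} and y is a multiple of e;
   this kernel accounts for v and v0 in the equivalence of special tuples.
   Conjugating by the element (P, p) of G pulls mu_{Y,y} back to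
   mu_{P(Y + L_{p,y})P^-1, Py}, which accounts for P and p.  Surjectivity:
   compose a functional on g with a linear projection onto g and represent
   the result by the trace pairing, after K-skew-symmetrising. *)

Lemma scalar_mx_trace (F : comPzRingType) m k (f : 'M[F]_(m, k) -> F) :
  scalar f -> exists A : 'M[F]_(k, m), forall X, f X = \tr (A *m X).
Proof.
move=> fL; pose g : {scalar 'M[F]_(m, k)} := HB.pack f (GRing.isLinear.Build _ _ _ _ f fL).
exists (\matrix_(j, i) g (delta_mx i j)) => X; rewrite -[f X]/(g X).
rewrite {1}(matrix_sum_delta X) /mxtrace.
under [RHS]eq_bigr => j _ do rewrite mxE.
rewrite exchange_big linear_sum; apply: eq_bigr => i _.
rewrite linear_sum; apply: eq_bigr => j _.
by rewrite linearZ mxE mulrC.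
Qed.

Lemma mxtrace11 (F : pzSemiRingType) (A : 'M[F]_1) : \tr A = A 0 0.
Proof. by rewrite /mxtrace big_ord1. Qed.

Lemma mx11_entry (T : Type) (A B : 'M[T]_1) : A 0 0 = B 0 0 -> A = B.
Proof. by move=> AB; apply/matrixP => i j; rewrite !ord1. Qed.

Lemma mx_delta_entry (F : pzSemiRingType) m (A : 'M[F]_m) i j :
  ((delta_mx i 0 : 'cV_m)^T *m A *m (delta_mx j 0 : 'cV_m)) 0 0 = A i j.
Proof. by rewrite trmx_delta -rowE -colE !mxE. Qed.

Lemma mulmx1_invmx (F : comUnitRingType) m (A B : 'M[F]_m) :
  A *m B = 1%:M -> invmx A = B.
Proof. by move=> AB; have [uA _] := mulmx1_unit AB; rewrite -[LHS]mulmx1 -AB mulKmx. Qed.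

Lemma mx_row0_col0_decomp (F : pzRingType) m (A : 'M[F]_m.+1) :
  A 0 0 = 0 -> (forall i j, i != 0 -> j != 0 -> A i j = 0) ->
  A = delta_mx 0 0 *m row 0 A + col 0 A *m delta_mx 0 0.
Proof.
move=> A00 A_off; apply/matrixP => i j; rewrite !mxE !big_ord1 !mxE.
have [-> | i0] := eqVneq i 0; have [-> | j0] := eqVneq j 0.
all: rewrite ?eqxx ?(negbTE i0) ?(negbTE j0) /= ?A00 ?mul1r ?mulr1 ?mulr0 ?mul0r ?addr0 ?add0r //.
exact: A_off.
Qed.

Section Galilei.
Variables (R : realType) (n : nat) (Kt : 'M[R]_n).
Hypotheses (Ksym : Kt^T = Kt) (Kinv : Kt *m Kt = 1%:M).

Local Notation N := n.+2.
Local Notation K := (Kmat Kt).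
Local Notation e := (@elast R n).
Local Notation L := (Lmx Kt).
Local Notation star := (star Kt).

Definition efirst : 'cV[R]_N := delta_mx 0 0.

Definition mid (a : 'I_n) : 'I_N := @Ordinal N a.+1 (ltnW (ltn_ord a)).

Variant block_index_spec : 'I_N -> Type :=
  | IndexFirst : block_index_spec ord0
  | IndexMid a : block_index_spec (mid a)
  | IndexLast : block_index_spec ord_max.

Lemma block_indexP i : block_index_spec i.
Proof.
case: i => [[|k] lt_k].
  by rewrite (_ : Ordinal _ = ord0); [exact: IndexFirst | apply: val_inj].
have [lt_kn | ge_kn] := ltnP k n.
  by rewrite (_ : Ordinal _ = mid (Ordinal lt_kn)); [exact: IndexMid | apply: val_inj].
rewrite (_ : Ordinal _ = ord_max); first exact: IndexLast.
by apply: val_inj => /=; lia.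
Qed.

Lemma KmatE :
  (K ord0 ord0 = 0) * (forall a, K ord0 (mid a) = 0) * (K ord0 ord_max = 1)
  * (forall a, K (mid a) ord0 = 0) * (forall a b, K (mid a) (mid b) = Kt a b)
  * (forall a, K (mid a) ord_max = 0) * (K ord_max ord0 = 1)
  * (forall a, K ord_max (mid a) = 0) * (K ord_max ord_max = 0).
Proof.
have midE a : mid_index (mid a) = Some a by rewrite /mid_index /= valK.
have lastE : @mid_index n (@ord_max n.+1) = None by rewrite /mid_index /= insubF // ltnn.
have mid_last a : (mid a == n.+1 :> nat) = false by rewrite /= eqSS ltn_eqF.
by do !split=> *; rewrite mxE /= ?mid_last ?midE ?lastE ?eqxx ?andbF.
Qed.

Lemma sum_block_index (F : 'I_N -> R) :
  \sum_k F k = F ord0 + \sum_a F (mid a) + F ord_max.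
Proof.
rewrite big_ord_recl big_ord_recr /= addrA; congr (_ + _ + _).
  by apply: eq_bigr => a _; congr F; apply: val_inj.
by congr F; apply: val_inj.
Qed.

Lemma trmx_Kmat : K^T = K.
Proof.
apply/matrixP => i j; rewrite mxE.
by case: (block_indexP i) => [|a|]; case: (block_indexP j) => [|b|]; rewrite ?KmatE // -{1}Ksym mxE.
Qed.

Lemma mulKmat : K *m K = 1%:M.
Proof.
apply/matrixP => i j; rewrite !mxE sum_block_index.
case: (block_indexP i) => [|a|]; case: (block_indexP j) => [|b|].
all: under eq_bigr => k _ do rewrite ?KmatE ?mul0r ?mulr0.
all: rewrite ?KmatE ?big1_eq ?mul0r ?mulr0 ?mul1r ?addr0 ?add0r ?eqxx //.
- by have /matrixP/(_ a b) := Kinv; rewrite !mxE.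
- by rewrite -(inj_eq val_inj) /= eqSS ltn_eqF.
- by rewrite -(inj_eq val_inj) /= eqSS eq_sym ltn_eqF.
Qed.

Lemma Kmat_elast : K *m e = efirst.
Proof.
apply/matrixP => i j; rewrite /elast -colE (ord1 j) [LHS]mxE [RHS]mxE.
by case: (block_indexP i) => *; rewrite ?KmatE.
Qed.

Lemma Kmat_efirst : K *m efirst = e.
Proof. by rewrite -Kmat_elast mulmxA mulKmat mul1mx. Qed.

Lemma mulKKmx m (A : 'M[R]_(N, m)) : K *m (K *m A) = A.
Proof. by rewrite mulmxA mulKmat mul1mx. Qed.

Lemma ino_skew X : ino Kt X -> X^T *m K = - (K *m X).
Proof. by move/eqP; rewrite addr_eq0 => /eqP. Qed.

Lemma ino0 : ino Kt 0.
Proof. by rewrite /ino trmx0 mul0mx mulmx0 addr0. Qed.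

Lemma inoP a X Y : ino Kt X -> ino Kt Y -> ino Kt (a *: X + Y).
Proof.
rewrite /ino => oX oY; rewrite linearP /= mulmxDl mulmxDr addrACA.
by rewrite -scalemxAl -scalemxAr -scalerDr oX oY scaler0 addr0.
Qed.

Lemma inoD X Y : ino Kt X -> ino Kt Y -> ino Kt (X + Y).
Proof. by move=> oX oY; rewrite -[X in X + Y]scale1r; apply: inoP. Qed.

Lemma inoZ a X : ino Kt X -> ino Kt (a *: X).
Proof. by move=> oX; rewrite -[_ *: _]addr0; apply: inoP => //; apply: ino0. Qed.

Lemma inoB X Y : ino Kt X -> ino Kt Y -> ino Kt (X - Y).
Proof. by move=> oX oY; rewrite -scaleN1r addrC; apply: inoP. Qed.

Lemma ino_alt X (u : 'cV[R]_N) : ino Kt X -> u^T *m K *m X *m u = 0.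
Proof.
move=> oX; apply: mx11_entry; set s := u^T *m K *m X *m u.
have : s^T = - s.
  by rewrite !trmx_mul trmxK trmx_Kmat (mulmxA X^T) (ino_skew oX) mulNmx mulmxN !mulmxA.
by move/matrixP/(_ 0 0); rewrite !mxE; lra.
Qed.

Lemma starP a x y : star (a *: x + y) = a *: star x + star y.
Proof. by rewrite /star linearP /= mulmxDl scalemxAl. Qed.

Lemma Lmx_linear_l a u u' w : L (a *: u + u') w = a *: L u w + L u' w.
Proof.
rewrite /Lmx starP mulmxDl mulmxDr -scalemxAl -scalemxAr.
by rewrite scalerBr opprD addrACA.
Qed.

Lemma trmx_Lmx u w : (L u w)^T = K *m w *m u^T - K *m u *m w^T.
Proof. by rewrite /Lmx /star linearB /= !trmx_mul !trmxK trmx_Kmat. Qed.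

Lemma ino_Lmx u w : ino Kt (L u w).
Proof.
rewrite /ino trmx_Lmx /Lmx /star mulmxBl mulmxBr !mulmxA.
by rewrite addrC addrA subrK subrr.
Qed.

Lemma mxtrace_Lmx u w X : ino Kt X ->
  \tr (L u w *m X) = - ((u^T *m K *m X *m w) 0 0 *+ 2).
Proof.
have tr_rank1 (v : 'cV[R]_N) (r : 'rV[R]_N) : \tr (v *m r) = (r *m v) 0 0.
  by rewrite mxtrace_mulC mxtrace11.
move=> oX; rewrite /Lmx /star mulmxBl linearB /= -!mulmxA !tr_rank1 !mulmxA.
suff -> : (w^T *m K *m X *m u) 0 0 = - (u^T *m K *m X *m w) 0 0.
  by rewrite mulr2n opprD.
transitivity ((w^T *m K *m X *m u)^T 0 0); first by rewrite [RHS]mxE.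
rewrite !trmx_mul trmxK trmx_Kmat (mulmxA X^T) (ino_skew oX).
by rewrite mulNmx mulmxN mxE !mulmxA.
Qed.

Lemma inO_mulVmx P : inO Kt P -> K *m P^T *m K *m P = 1%:M.
Proof. by move=> oP; rewrite -!mulmxA (mulmxA P^T) oP mulKmat. Qed.

Lemma inO_unit P : inO Kt P -> P \in unitmx.
Proof. by move=> /inO_mulVmx /mulmx1_unit[]. Qed.

Lemma inO_invmx P : inO Kt P -> invmx P = K *m P^T *m K.
Proof. by move=> /inO_mulVmx /mulmx1C /mulmx1_invmx. Qed.

Lemma ino_conj P X : inO Kt P -> ino Kt X -> ino Kt (invmx P *m X *m P).
Proof.
move=> oP oX; rewrite /ino inO_invmx //.
suff -> : (K *m P^T *m K *m X *m P)^T *m K + K *m (K *m P^T *m K *m X *m P)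
          = P^T *m (X^T *m K + K *m X) *m P by rewrite oX mulmx0 mul0mx.
by rewrite !trmx_mul !trmxK trmx_Kmat !(mulmxDr, mulmxDl) -!mulmxA !mulKKmx ?mulKmat ?mulmx1.
Qed.

Lemma ino_conjV P X : inO Kt P -> ino Kt X -> ino Kt (P *m X *m invmx P).
Proof.
move=> oP oX; rewrite /ino inO_invmx //.
suff -> : (P *m X *m (K *m P^T *m K))^T *m K + K *m (P *m X *m (K *m P^T *m K))
          = K *m P *m K *m (X^T *m K + K *m X) *m K *m P^T *m K.
  by rewrite oX mulmx0 !mul0mx.
by rewrite !trmx_mul !trmxK trmx_Kmat !(mulmxDr, mulmxDl) -!mulmxA !mulKKmx ?mulKmat ?mulmx1.
Qed.

Definition gal_mx (sp : 'rV[R]_N) (P : 'M[R]_N) : 'M[R]_(1 + N) := block_mx 1 sp 0 P.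

Lemma invmx_gal sp P : P \in unitmx ->
  invmx (gal_mx sp P) = gal_mx (- sp *m invmx P) (invmx P).
Proof.
move=> uP; apply: mulmx1_invmx; rewrite /gal_mx mulmx_block.
rewrite !mul0mx !mulmx0 !addr0 add0r mulmxV // (_ : 1 = 1%:M) // !mul1mx.
by rewrite mulNmx addNr -scalar_mx_block.
Qed.

Lemma conj_gvee sp P X xs : P \in unitmx ->
  invmx (gal_mx sp P) *m gvee_mx X xs *m gal_mx sp P
  = gvee_mx (invmx P *m X *m P) (xs *m P - sp *m invmx P *m X *m P).
Proof.
move=> uP; rewrite invmx_gal // /gal_mx /gvee_mx !mulmx_block (_ : 1 = 1%:M) //.
by rewrite !(mul0mx, mulmx0, addr0, add0r, mul1mx) mulmxDl !mulNmx.
Qed.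

Lemma mu_gvee (Y X : 'M[R]_N) y xs : mu Y y (gvee_mx X xs) = 2^-1 * \tr (Y *m X) + (xs *m y) 0 0.
Proof. by rewrite /mu /gvee_mx block_mxKdr block_mxKur. Qed.

Lemma mu_coadjoint Y y P p Z : inO Kt P -> in_g Kt Z ->
  mu Y y (invmx (gal_mx (star p) P) *m Z *m gal_mx (star p) P)
  = mu (P *m (Y + L p y) *m invmx P) (P *m y) Z.
Proof.
move=> oP [X [x [oX _ _ ->]]]; rewrite conj_gvee ?inO_unit // !mu_gvee.
set W := invmx P *m X *m P.
have trW : \tr (P *m (Y + L p y) *m invmx P *m X) = \tr (Y *m W) + \tr (L p y *m W).
  by rewrite -mxtraceD -mulmxDl /W -!mulmxA mxtrace_mulC -!mulmxA.
rewrite trW (mxtrace_Lmx _ _ (ino_conj oP oX)) mulmxBl.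
rewrite [(_ - _ : 'M_1) 0 0]mxE [(- _ : 'M_1) 0 0]mxE /W /star !mulmxA mulr2n.
set a := \tr _; set b := (_ *m y) 0 0; set c := (_ *m y) 0 0.
by field.
Qed.

Lemma star_elast x : star x *m e = x^T *m efirst.
Proof. by rewrite /star -mulmxA Kmat_elast. Qed.

Lemma star_elastE x : star x *m e = (x 0 0)%:M.
Proof. by rewrite star_elast -colE; apply/matrixP => i j; rewrite !ord1 !mxE eqxx mulr1n. Qed.

Lemma star_efirst_elast : star efirst *m e = 1%:M.
Proof.
by rewrite star_elast trmx_delta mul_delta_mx; apply/matrixP => i j; rewrite !ord1 !mxE.
Qed.

Lemma star_elast_efirst : star e = efirst^T.
Proof. by rewrite /star -Kmat_elast trmx_mul trmx_Kmat. Qed.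

Lemma star_delta_elast i : i != 0 -> star (delta_mx i 0) *m e = 0.
Proof.
by move=> i0; rewrite star_elast trmx_delta mul_delta_mx_cond (negbTE i0) mulr0n.
Qed.

Lemma col_elast_of_star_orth d :
  (forall x, star x *m e = 0 -> star x *m d = 0) -> d = (K *m d) 0 0 *: e.
Proof.
move=> d_orth; rewrite -[LHS]mulKKmx -Kmat_efirst scalemxAr; congr (_ *m _).
apply/matrixP => i j; rewrite (ord1 j) [RHS]mxE [efirst _ _]mxE eqxx andbT.
have [-> | i0] := eqVneq i 0; first by rewrite mulr1.
have /matrixP/(_ 0 0) := d_orth _ (star_delta_elast i0).
by rewrite /star trmx_delta -mulmxA -rowE mulr0 [in RHS]mxE mxE.
Qed.

Lemma Lmx_delta_elast i j : i != 0 -> j != 0 ->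
  L (delta_mx i 0) (delta_mx j 0) *m e = 0.
Proof.
move=> i0 j0; rewrite /Lmx mulmxBl -2!(mulmxA _ (star _)).
by rewrite !star_delta_elast // !mulmx0 subr0.
Qed.

Lemma Lmx_elast_of_trace_orth D : ino Kt D ->
  (forall X, ino Kt X -> X *m e = 0 -> \tr (D *m X) = 0) -> D = L (D *m efirst) e.
Proof.
(* K D is skew-symmetric and, tested against the L_{e_i,e_j} with i, j <> 0,
   vanishes off its first row and column. *)
move=> oD D_orth; set A := K *m D.
have A_off i j : i != 0 -> j != 0 -> A i j = 0.
  move=> i0 j0; have oL := ino_Lmx (delta_mx i 0) (delta_mx j 0).
  have := D_orth _ oL (Lmx_delta_elast i0 j0).
  rewrite mxtrace_mulC (mxtrace_Lmx _ _ oD) => /eqP; rewrite oppr_eq0 mulrn_eq0 /= => /eqP.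
  by rewrite -(mulmxA _ K) mx_delta_entry.
have A00 : A 0 0 = 0.
  have /matrixP/(_ 0 0) := ino_alt efirst oD.
  by rewrite -(mulmxA _ K) /efirst mx_delta_entry [(0 : 'M_1) 0 0]mxE.
apply: (can_inj (mulKKmx (m := N))); rewrite -/A {1}(mx_row0_col0_decomp A00 A_off).
rewrite /Lmx star_elast_efirst /star trmx_mul -(mulmxA efirst^T) (ino_skew oD) mulmxBr !mulmxA.
by rewrite Kmat_elast -/A mulmxN opprK addrC rowE colE trmx_delta !mulmxA.
Qed.

Lemma in_g_gvee X x : ino Kt X -> X *m e = 0 -> star x *m e = 0 -> in_g Kt (gvee_mx X (star x)).
Proof. by move=> *; exists X, x. Qed.

Lemma star0 : star 0 = 0.
Proof. by rewrite /star trmx0 mul0mx. Qed.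

Lemma in_g_gvee0 X : ino Kt X -> X *m e = 0 -> in_g Kt (gvee_mx X 0).
Proof. by move=> oX Xe; exists X, 0; rewrite star0 mul0mx. Qed.

Lemma mu_eq_on_g Y1 Y2 y1 y2 : ino Kt Y1 -> ino Kt Y2 ->
  (forall Z, in_g Kt Z -> mu Y1 y1 Z = mu Y2 y2 Z)
  <-> exists v v0, Y1 + L v e = Y2 /\ y1 = y2 + v0 *: e.
Proof.
move=> oY1 oY2; split=> [eq_mu | [v [v0 [<- ->]]] _ [X [x [oX Xe xe ->]]]].
  have tr_orth X : ino Kt X -> X *m e = 0 -> \tr ((Y2 - Y1) *m X) = 0.
    move=> oX Xe; have := eq_mu _ (in_g_gvee0 oX Xe).
    by rewrite !mu_gvee !mul0mx mulmxBl linearB /= mxE !addr0 => eq_tr; lra.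
  have star_orth x : star x *m e = 0 -> star x *m (y1 - y2) = 0.
    move=> xe; have := eq_mu _ (in_g_gvee ino0 (mul0mx _ _) xe).
    by rewrite !mu_gvee !mulmx0 linear0 mulr0 !add0r mulmxBr => /mx11_entry ->; rewrite subrr.
  exists ((Y2 - Y1) *m efirst), ((K *m (y1 - y2)) 0 0); split.
    by rewrite -(Lmx_elast_of_trace_orth (inoB oY2 oY1) tr_orth) subrKC.
  by rewrite -(col_elast_of_star_orth star_orth) subrKC.
rewrite !mu_gvee mulmxDl mxtraceD (mxtrace_Lmx _ _ oX) -(mulmxA _ X e) Xe mulmx0.
by rewrite mulmxDr -scalemxAr xe scaler0 addr0 [(0 : 'M_1) 0 0]mxE mul0rn oppr0 addr0.
Qed.

Lemma equiv_tuple_coadj Y Y' y y' : ino Kt Y -> ino Kt Y' ->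
  equiv_tuple Kt Y y Y' y' <-> same_coadj_orbit Kt (mu Y y) (mu Y' y').
Proof.
move=> oY oY'.
have oYc P p : inO Kt P -> ino Kt (P *m (Y + L p y) *m invmx P).
  by move=> oP; apply/ino_conjV/inoD/ino_Lmx.
split=> [[P [v [p [v0 [oPe pe eqY eqy]]]]] | [_ [[P [p [oPe pe ->]]] orbit]]].
  have [oP _] := oPe; exists (gal_mx (star p) P); split; first by exists P, p.
  move=> Z gZ; rewrite mu_coadjoint //.
  by move: Z gZ; apply/(mu_eq_on_g _ _ oY' (oYc P p oP)); exists v, v0.
have [oP _] := oPe.
have /(mu_eq_on_g _ _ oY' (oYc P p oP)) [v [v0 [eqY eqy]]] :
    forall Z, in_g Kt Z -> mu Y' y' Z = mu (P *m (Y + L p y) *m invmx P) (P *m y) Z.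
  by move=> Z gZ; rewrite orbit // mu_coadjoint.
by exists P, v, p, v0.
Qed.

Definition skew_part X := 2^-1 *: (X - K *m X^T *m K).

Lemma skew_partP a X Y : skew_part (a *: X + Y) = a *: skew_part X + skew_part Y.
Proof.
rewrite /skew_part linearP /= mulmxDr mulmxDl -scalemxAr -scalemxAl.
by rewrite scalerA mulrC -scalerA -scalerDr opprD scalerBr addrACA.
Qed.

Lemma ino_skew_part X : ino Kt (skew_part X).
Proof.
apply: inoZ; rewrite /ino linearB /= !trmx_mul trmxK trmx_Kmat.
by rewrite mulmxBl mulmxBr -!mulmxA mulKmat mulmx1 mulKKmx addrA subrK subrr.
Qed.

Lemma skew_part_id X : ino Kt X -> skew_part X = X.
Proof.
move=> oX; rewrite /skew_part -mulmxA (ino_skew oX) mulmxN mulKKmx opprK.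
by rewrite -[X in X + X]scale1r -scalerDl scalerA mulVf ?scale1r // pnatr_eq0.
Qed.

Lemma mxtrace_skew_part A X : ino Kt X -> \tr (skew_part A *m X) = \tr (A *m X).
Proof.
move=> oX; rewrite /skew_part -scalemxAl mxtraceZ mulmxBl linearB /=.
suff -> : \tr (K *m A^T *m K *m X) = - \tr (A *m X) by rewrite opprK; field.
rewrite -!mulmxA mxtrace_mulC -mxtrace_tr !trmx_mul !trmxK trmx_Kmat -!mulmxA.
rewrite mxtrace_mulC -!mulmxA (mulmxA X^T) (ino_skew oX) mulNmx linearN /=.
by rewrite mxtrace_mulC -!mulmxA mulKKmx.
Qed.

(* Linear projections onto the two components of g. *)
Definition g_part X := skew_part X - L (skew_part X *m e) efirst.
Definition gvec_part (x : 'cV[R]_N) := x - x 0 0 *: efirst.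

Lemma g_partP a X Y : g_part (a *: X + Y) = a *: g_part X + g_part Y.
Proof.
rewrite /g_part skew_partP mulmxDl -scalemxAl Lmx_linear_l.
by rewrite [in RHS]scalerBr opprD addrACA.
Qed.

Lemma ino_g_part X : ino Kt (g_part X).
Proof. exact: (inoB (ino_skew_part X) (ino_Lmx _ _)). Qed.

Lemma g_part_elast X : g_part X *m e = 0.
Proof.
have oS := ino_skew_part X.
have S_alt : star (skew_part X *m e) *m e = 0.
  rewrite /star trmx_mul -!mulmxA (mulmxA _ K) (ino_skew oS) mulNmx mulmxN !mulmxA.
  by rewrite ino_alt ?oppr0.
rewrite /g_part mulmxBl /Lmx mulmxBl -2!(mulmxA _ (star _)) S_alt star_efirst_elast.
by rewrite mulmx0 subr0 mulmx1 subrr.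
Qed.

Lemma g_part_id X : ino Kt X -> X *m e = 0 -> g_part X = X.
Proof.
move=> oX Xe; rewrite /g_part skew_part_id // Xe /Lmx /star trmx0 !mul0mx mulmx0.
by rewrite subrr subr0.
Qed.

Lemma gvec_partP a x y : gvec_part (a *: x + y) = a *: gvec_part x + gvec_part y.
Proof.
by rewrite /gvec_part !mxE scalerDl -scalerA [in RHS]scalerBr opprD addrACA.
Qed.

Lemma star_gvec_part_elast x : star (gvec_part x) *m e = 0.
Proof.
by rewrite star_elastE !mxE !eqxx /= mulr1 subrr raddf0.
Qed.

Lemma gvec_part_id x : star x *m e = 0 -> gvec_part x = x.
Proof.
rewrite star_elastE /gvec_part => /matrixP/(_ 0 0); rewrite !mxE /= mulr1n => ->.
by rewrite scale0r subr0.
Qed.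

Lemma gvee_mxP a (X1 X2 : 'M[R]_N) (xs1 xs2 : 'rV[R]_N) :
  gvee_mx (a *: X1 + X2) (a *: xs1 + xs2) = a *: gvee_mx X1 xs1 + gvee_mx X2 xs2.
Proof. by rewrite /gvee_mx scale_block_mx add_block_mx !scaler0 !addr0. Qed.

Lemma mu_surjective phi : gdual Kt phi ->
  exists Y y, ino Kt Y /\ forall Z, in_g Kt Z -> phi Z = mu Y y Z.
Proof.
move=> phi_lin.
have gX X : in_g Kt (gvee_mx (g_part X) 0) := in_g_gvee0 (ino_g_part X) (g_part_elast X).
have gx x : in_g Kt (gvee_mx 0 (star (gvec_part x))).
  exact: in_g_gvee ino0 (mul0mx _ _) (star_gvec_part_elast x).
have [A fA] : exists A, forall X, phi (gvee_mx (g_part X) 0) = \tr (A *m X).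
  apply: scalar_mx_trace => a X1 X2 /=.
  by rewrite -phi_lin // -gvee_mxP g_partP scaler0 addr0.
have [c hc] : exists c : 'rV_N, forall x, phi (gvee_mx 0 (star (gvec_part x))) = \tr (c *m x).
  apply: scalar_mx_trace => a x1 x2 /=.
  by rewrite -phi_lin // -gvee_mxP gvec_partP starP scaler0 addr0.
exists (2 *: skew_part A), (K *m c^T); split; first exact/inoZ/ino_skew_part.
move=> _ [X [x [oX Xe xe ->]]].
have split_Z : gvee_mx X (star x) = 1 *: gvee_mx (g_part X) 0 + gvee_mx 0 (star (gvec_part x)).
  by rewrite -gvee_mxP !scale1r addr0 add0r g_part_id // gvec_part_id.
rewrite {1}split_Z phi_lin // mul1r fA hc mu_gvee -scalemxAl mxtraceZ mulrA mulVf ?pnatr_eq0 //.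
by rewrite mul1r mxtrace_skew_part // mxtrace11 /star -mulmxA mulKKmx -trmx_mul [(_^T) 0 0]mxE.
Qed.
End Galilei.

Theorem proposition4 (R : realType) (n : nat) (Kt : 'M[R]_n)
    (Ksym : Kt^T = Kt) (Kinv : Kt *m Kt = 1%:M) :
  (forall phi : 'M[R]_(1 + n.+2) -> R, gdual Kt phi ->
     exists (Y : 'M[R]_(n.+2)) (y : 'cV[R]_(n.+2)),
       ino Kt Y /\ forall Z, in_g Kt Z -> phi Z = mu Y y Z)
  /\
  (forall (Y Y' : 'M[R]_(n.+2)) (y y' : 'cV[R]_(n.+2)),
     ino Kt Y -> ino Kt Y' ->
     (equiv_tuple Kt Y y Y' y' <->
      same_coadj_orbit Kt (mu Y y) (mu Y' y'))).
Proof.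
by split=> [phi | Y Y' y y']; [apply: mu_surjective | apply: equiv_tuple_coadj].
Qed.
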